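(* Let $g\in\mathcal M_K$ be given by $g=\beta Q|_{\mathfrak p}+\alpha_1Q|_{\mathfrak k_1}+\cdots+\alpha_{r+s}Q|_{\mathfrak k_{r+s}}$ with $\beta,\alpha_1,\dots,\alpha_{r+s}>0$. Then the scalar curvature of $g$ is $$S(g)=-\frac14\sum_{i=1}^{r+s}\frac{\alpha_i}{\beta^2}d_i(1-\kappa_i)-\frac{n}{2\beta}+\frac14\sum_{i=1}^{r}\frac{d_i\kappa_i}{\alpha_i}.$$
   Context: Let $G$ be a connected non-compact simple Lie group with Lie algebra $\mathfrak g$, $K$ a maximal compact subgroup with Lie algebra $\mathfrak k$, $B$ the Killing form of $\mathfrak g$, and $\mathfrak p$ the $B$-orthogonal complement of $\mathfrak k$ in $\mathfrak g$. Let $Q=B|_{\mathfrak p}-B|_{\mathfrak k}$. Write $\mathfrak k=\mathfrak k_1\oplus\cdots\oplus\mathfrak k_{r+s}$, where $\mathfrak k_1,\dots,\mathfrak k_r$ are the simple ideals of $[\mathfrak k,\mathfrak k]$, $\mathfrak k_{r+1}$ is the centre of $\mathfrak k$, and $s=1$ if the centre is nontrivial, $s=0$ otherwise. Let $n=\dim\mathfrak p$, $d_i=\dim\mathfrak k_i$, and define $\kappa_i$ by $B_i=\kappa_iB|_{\mathfrak k_i}$, $B_i$ the Killing form of $\mathfrak k_i$. Left-invariant tensor fields on $G$ are identified with bilinear forms on $\mathfrak g$; $Q|_{\mathfrak u}$ denotes $Q$ restricted to $\mathfrak u$ and extended by zero on its $Q$-orthogonal complement. $\mathcal M_K$ is the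 set of left-invariant metrics on $G$ naturally reductive with respect to $G\times K$ (acting by $(x,k)y=xyk^{-1}$), which by a theorem of Gordon are exactly the metrics $\beta Q|_{\mathfrak p}+\sum_i\alpha_iQ|_{\mathfrak k_i}$ with all coefficients positive. $S$ denotes scalar curvature. *)

From mathcomp Require Import all_boot all_order all_algebra.
Set Implicit Arguments. Unset Strict Implicit. Unset Printing Implicit Defensive.
Import Order.TTheory GRing.Theory Num.Theory.
Local Open Scope ring_scope.

Section LieDefs.
Variables (R : realFieldType) (N : nat).

Definition vec := 'I_N -> R.
(* structure constants: [e_i, e_j] = \sum_k c i j k e_k *)
Definition sconst := 'I_N -> 'I_N -> 'I_N -> R.

Definition basis_vec (a : 'I_N) : vec := fun i => (i == a)%:R.

Definition lie_bracket (c : sconst) (X Y : vec) : vec :=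
  fun k => \sum_i \sum_j X i * Y j * c i j k.

Definition is_lie_algebra (c : sconst) : Prop :=
  (forall i j k, c i j k = - c j i k) /\
  (forall i j l m, \sum_k (c i j k * c k l m + c j l k * c k i m + c l i k * c k j m) = 0).

(* matrix of ad X : column j = coordinates of [X, e_j] *)
Definition adm (c : sconst) (X : vec) : 'M[R]_N :=
  \matrix_(k, j) \sum_i X i * c i j k.

Definition killing (c : sconst) (X Y : vec) : R := \tr (adm c X *m adm c Y).

Definition killing_on (c : sconst) (S : pred 'I_N) (X Y : vec) : R :=
  \sum_(a | S a) \sum_(b | S b) adm c X a b * adm c Y b a.

Definition supported (S : pred 'I_N) (X : vec) : Prop := forall a, ~~ S a -> X a = 0.
Definition nonzero (X : vec) : Prop := exists a, X a != 0.

Definition proj (S : pred 'I_N) (X : vec) : vec := fun a => if S a then X a else 0.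

Definition lsubspace (I : vec -> Prop) : Prop :=
  I (fun _ => 0) /\ (forall X Y, I X -> I Y -> I (fun a => X a + Y a)) /\
  (forall (t : R) X, I X -> I (fun a => t * X a)).

Definition ideal_in (c : sconst) (S : pred 'I_N) (I : vec -> Prop) : Prop :=
  (forall X, I X -> supported S X) /\ lsubspace I /\
  (forall X Y, supported S X -> I Y -> I (lie_bracket c X Y)).

Definition simple_in (c : sconst) (S : pred 'I_N) : Prop :=
  (exists X Y, supported S X /\ supported S Y /\ nonzero (lie_bracket c X Y)) /\
  (forall I, ideal_in c S I ->
     (forall X, I X -> forall a, X a = 0) \/ (forall X, supported S X -> I X)).

(* ---- Levi-Civita connection / curvature of a left-invariant metric ----
   The metric is given by its Gram matrix G in the basis (G a b = <e_a,e_b>). *)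
Definition koszul (c : sconst) (G : 'M[R]_N) (a b d : 'I_N) : R :=
  2^-1 * (\sum_k c a b k * G k d - \sum_k c b d k * G k a + \sum_k c d a k * G k b).

(* nabla_{e_a} e_b = \sum_f christ a b f e_f *)
Definition christ (c : sconst) (G : 'M[R]_N) (a b f : 'I_N) : R :=
  \sum_d koszul c G a b d * invmx G d f.

(* R(e_a,e_b) e_d = \sum_f curv a b d f e_f, with
   R(X,Y) = nabla_X nabla_Y - nabla_Y nabla_X - nabla_[X,Y] *)
Definition curv (c : sconst) (G : 'M[R]_N) (a b d f : 'I_N) : R :=
  \sum_h (christ c G b d h * christ c G a h f - christ c G a d h * christ c G b h f)
  - \sum_k c a b k * christ c G k d f.

(* Ric(e_b,e_d) = trace (X |-> R(X,e_b) e_d) *)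
Definition ricci (c : sconst) (G : 'M[R]_N) (b d : 'I_N) : R :=
  \sum_a curv c G a b d a.

Definition scal (c : sconst) (G : 'M[R]_N) : R :=
  \sum_b \sum_d invmx G b d * ricci c G b d.

Definition gram (m : vec -> vec -> R) : 'M[R]_N :=
  \matrix_(a, b) m (basis_vec a) (basis_vec b).

End LieDefs.

From mathcomp Require Import all_boot all_order all_algebra.
From mathcomp Require Import ring lra zify.
Import Order.TTheory GRing.Theory Num.Theory.
Local Open Scope ring_scope.
Set Implicit Arguments. Unset Strict Implicit. Unset Printing Implicit Defensive.

(* Put mu = beta on p and mu = -alpha_i on k_i.  Since [k_i, k_j] = 0 for i <> j
   and k_j = [k_j, k_j] when k_j is simple, the invariance of the Killing form B
   makes g = p + k_1 + ... + k_(r+s) a B-orthogonal decomposition, so the metric is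
   g(e_a, e_b) = mu_a B(e_a, e_b).  For a metric of this shape the invariance of B
   turns the Koszul formula into
     nabla_(e_a) e_b = 1/2 sum_f c_ab^f (1 + (mu_b - mu_a) / mu_f) e_f,
   a connection with vanishing trace, and the scalar curvature becomes a weighted
   combination of the block sums
     sig(Z, X, Y) = sum_(b in Z) sum_d g^bd sum_(x in X, y in Y) c_by^x c_dx^y.
   The bracket relations of the Cartan decomposition only leave sig(k_i,k_i,k_i),
   sig(k_i,p,p) and sig(p,p,k_i) = sig(p,k_i,p), which are determined by:
   sum_(X,Y) sig(Z,X,Y) = dim Z / mu_Z, because sum c c is the Killing form;
   sig(k_i,k_i,k_i) = kappa_i d_i / mu_(k_i), by definition of kappa_i; and
   beta sig(p,p,k_i) = - alpha_i sig(k_i,p,p), because mu_Z sig(Z,X,Y) only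
   depends on B and is symmetric in Z and Y. *)

Lemma big_option (V : nmodType) (T : finType) (F : option T -> V) :
  \sum_o F o = F None + \sum_i F (Some i).
Proof.
rewrite (bigD1 None) //=; congr (_ + _).
rewrite (reindex_omap Some id); last by case.
by apply: eq_bigl => i /=; rewrite eqxx.
Qed.

Lemma invmx_diag_comm (R : comUnitRingType) n (A : 'M[R]_n) (w : 'I_n -> R) :
  A \in unitmx -> (forall i j, A i j * w j = w i * A i j) ->
  forall i j, invmx A i j * w j = w i * invmx A i j.
Proof.
move=> Au Aw i j; pose P := diag_mx (\row_k w k).
have AP : A *m P = P *m A.
  by apply/matrixP => x y; rewrite mul_mx_diag mul_diag_mx !mxE.
have : invmx A *m P = P *m invmx A.
  rewrite -[LHS]mulmx1 -(mulmxV Au) mulmxA -(mulmxA _ P) -AP.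
  by rewrite !mulmxA (mulVmx Au) mul1mx.
by move/matrixP/(_ i j); rewrite mul_mx_diag mul_diag_mx !mxE.
Qed.

Lemma exchange_big_pair (V : nmodType) (I J K L : finType) (P : pred I)
    (F : I -> J -> K -> L -> V) :
  \sum_(i | P i) \sum_j \sum_k \sum_l F i j k l =
  \sum_k \sum_l \sum_(i | P i) \sum_j F i j k l.
Proof.
under eq_bigr do rewrite exchange_big.
rewrite exchange_big; apply: eq_bigr => k _.
by under eq_bigr do rewrite exchange_big; rewrite exchange_big.
Qed.

Section LieAlgebra.
Variables (R : realFieldType) (N : nat) (c : sconst R N).
Hypothesis lie : is_lie_algebra c.

Local Notation e := (@basis_vec R N).

Lemma sum_basis_vecl a (F : 'I_N -> R) : \sum_i e a i * F i = F a.
Proof.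
rewrite (bigD1 a) //= /basis_vec eqxx mul1r big1 ?addr0 // => i /negbTE ->.
by rewrite mul0r.
Qed.

Lemma sum_basis_vecr a (F : 'I_N -> R) : \sum_i F i * e a i = F a.
Proof. by rewrite -(sum_basis_vecl a F); apply: eq_bigr => i _; rewrite mulrC. Qed.

Lemma sum2_basis_vec a b (F : 'I_N -> 'I_N -> R) :
  \sum_x \sum_y e a x * e b y * F x y = F a b.
Proof.
under eq_bigr => x _ do under eq_bigr => y _ do rewrite -mulrA.
by under eq_bigr => x _ do rewrite -mulr_sumr sum_basis_vecl; rewrite sum_basis_vecl.
Qed.

Lemma supported_basis (S : pred 'I_N) a : S a -> supported S (e a).
Proof. by move=> Sa x; rewrite /basis_vec; case: eqP => // ->; rewrite Sa. Qed.

Lemma sconst_anti a b k : c a b k = - c b a k.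
Proof. by case: lie => anti _; apply: anti. Qed.

Lemma sconst_jacobi i j l m :
  \sum_k (c i j k * c k l m + c j l k * c k i m + c l i k * c k j m) = 0.
Proof. by case: lie => _ jacobi; apply: jacobi. Qed.

Lemma bracket_basis a b k : lie_bracket c (e a) (e b) k = c a b k.
Proof. exact: sum2_basis_vec. Qed.

Lemma bracket_supported (S T U : pred 'I_N) X Y :
  (forall a b k, S a -> T b -> ~~ U k -> c a b k = 0) ->
  supported S X -> supported T Y -> supported U (lie_bracket c X Y).
Proof.
move=> cSTU hX hY k Uk; rewrite /lie_bracket big1 // => a _; rewrite big1 // => b _.
have [Sa|/hX->] := boolP (S a); last by rewrite !mul0r.
have [Tb|/hY->] := boolP (T b); last by rewrite mulr0 mul0r.
by rewrite cSTU ?mulr0.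
Qed.

Lemma adm_basis a k j : adm c (e a) k j = c a j k.
Proof. by rewrite mxE sum_basis_vecl. Qed.

Lemma adm_lin X : adm c X = \sum_a X a *: adm c (e a).
Proof.
apply/matrixP => k j; rewrite mxE summxE; apply: eq_bigr => a _.
by rewrite mxE adm_basis.
Qed.

Lemma adm_bracket X Y :
  adm c (lie_bracket c X Y) = adm c X *m adm c Y - adm c Y *m adm c X.
Proof.
apply/matrixP => k j; rewrite !mxE.
have E1 : \sum_i lie_bracket c X Y i * c i j k =
    \sum_p \sum_q X p * Y q * (\sum_i c p q i * c i j k).
  rewrite /lie_bracket; under eq_bigr do rewrite mulr_suml.
  rewrite exchange_big; apply: eq_bigr => p _.
  under eq_bigr do rewrite mulr_suml.
  rewrite exchange_big; apply: eq_bigr => q _.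
  by rewrite mulr_sumr; apply: eq_bigr => i _; rewrite mulrA.
have E2 Z W : \sum_m adm c Z k m * adm c W m j =
    \sum_p \sum_q Z p * W q * (\sum_m c p m k * c q j m).
  under eq_bigr do rewrite !mxE mulr_suml.
  rewrite exchange_big; apply: eq_bigr => p _.
  under eq_bigr do rewrite mulr_sumr.
  rewrite exchange_big; apply: eq_bigr => q _.
  by rewrite mulr_sumr; apply: eq_bigr => m _; ring.
rewrite E1 E2 E2 [X in _ - X]exchange_big -sumrB; apply: eq_bigr => p _.
rewrite -sumrB; apply: eq_bigr => q _; rewrite [Y q * X p]mulrC -mulrBr.
congr (_ * _).
have hB : \sum_i c q j i * c i p k = - \sum_m c p m k * c q j m.
  by rewrite -sumrN; apply: eq_bigr => m _; rewrite (sconst_anti m p k); ring.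
have hC : \sum_i c j p i * c i q k = \sum_m c q m k * c p j m.
  by apply: eq_bigr => m _; rewrite (sconst_anti j p m) (sconst_anti m q k); ring.
have := sconst_jacobi p q j k; rewrite !big_split /= hB hC.
lra.
Qed.

Lemma killing_bracket X Y Z :
  killing c (lie_bracket c X Y) Z = killing c X (lie_bracket c Y Z).
Proof.
rewrite /killing !adm_bracket mulmxBl mulmxBr !raddfB /= !mulmxA.
rewrite [\tr (adm c Y *m adm c X *m adm c Z)]mxtrace_mulC mulmxA.
by rewrite [\tr (adm c Z *m adm c Y *m adm c X)]mxtrace_mulC mulmxA.
Qed.

Definition B a b := killing c (e a) (e b).

Lemma B_sym a b : B a b = B b a.
Proof. by rewrite /B /killing mxtrace_mulC. Qed.

Lemma killing_coord X Y : killing c X Y = \sum_a \sum_b X a * Y b * B a b.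
Proof.
rewrite /killing (adm_lin X) (adm_lin Y) mulmx_suml raddf_sum /=.
apply: eq_bigr => a _; rewrite mulmx_sumr raddf_sum /=; apply: eq_bigr => b _.
by rewrite -scalemxAl -scalemxAr !mxtraceZ mulrA.
Qed.

Lemma killing_basisr X d : killing c X (e d) = \sum_k X k * B k d.
Proof.
rewrite killing_coord; apply: eq_bigr => k _.
by under eq_bigr do rewrite mulrAC; rewrite sum_basis_vecr.
Qed.

Lemma killing_basisl X d : killing c (e d) X = \sum_k X k * B d k.
Proof.
rewrite killing_coord exchange_big; apply: eq_bigr => k _.
by under eq_bigr do rewrite -mulrA; rewrite sum_basis_vecl.
Qed.

Lemma killing0l X Y : (forall k, X k = 0) -> killing c X Y = 0.
Proof.
move=> X0; rewrite killing_coord big1 // => a _.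
by rewrite big1 // => b _; rewrite X0 !mul0r.
Qed.

Lemma killing0r X Y : (forall k, Y k = 0) -> killing c X Y = 0.
Proof.
move=> Y0; rewrite killing_coord big1 // => a _.
by rewrite big1 // => b _; rewrite Y0 mulr0 mul0r.
Qed.

Lemma killingDr Z X Y :
  killing c Z (fun a => X a + Y a) = killing c Z X + killing c Z Y.
Proof.
rewrite !killing_coord -big_split; apply: eq_bigr => a _.
by rewrite -big_split; apply: eq_bigr => b _ /=; ring.
Qed.

Lemma killingZr Z t X : killing c Z (fun a => t * X a) = t * killing c Z X.
Proof.
rewrite !killing_coord mulr_sumr; apply: eq_bigr => a _.
by rewrite mulr_sumr; apply: eq_bigr => b _ /=; ring.
Qed.

Lemma killing_proj (S : pred 'I_N) X Y : killing c (proj S X) (proj S Y) =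
  \sum_a \sum_b X a * Y b * (if S a && S b then B a b else 0).
Proof.
rewrite killing_coord; apply: eq_bigr => a _; apply: eq_bigr => b _.
by rewrite /proj; case: (S a); case: (S b) => /=; ring.
Qed.

Lemma nonzero_or_zero (X : vec R N) : nonzero X \/ forall k, X k = 0.
Proof.
have [/existsP [k Xk]|/existsPn X0] := boolP [exists k, X k != 0]; first by left; exists k.
by right=> k; apply/eqP; rewrite -[_ == _]negbK X0.
Qed.

Definition ad_trace (X Y : pred 'I_N) b d :=
  \sum_(x | X x) \sum_(y | Y y) c b y x * c d x y.

Lemma B_ad_trace a b : B a b = ad_trace predT predT a b.
Proof.
rewrite /B /killing /mxtrace; apply: eq_bigr => x _; rewrite mxE.
by apply: eq_bigr => y _; rewrite !adm_basis.
Qed.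

Lemma killing_on_basis (S : pred 'I_N) a b :
  killing_on c S (e a) (e b) = ad_trace S S a b.
Proof. by apply: eq_bigr => x _; apply: eq_bigr => y _; rewrite !adm_basis. Qed.

Lemma ad_traceC X Y b d : ad_trace X Y b d = ad_trace Y X d b.
Proof.
rewrite /ad_trace exchange_big; apply: eq_bigr => y _; apply: eq_bigr => x _.
by rewrite mulrC.
Qed.

Lemma ad_trace_partition (T : finType) (f : 'I_N -> T) (F : T -> T -> R) b d :
  \sum_x \sum_y c b y x * c d x y * F (f x) (f y) =
  \sum_X \sum_Y F X Y * ad_trace (fun x => f x == X) (fun y => f y == Y) b d.
Proof.
rewrite (partition_big f predT) //; apply: eq_bigr => X _.
under eq_bigr do rewrite (partition_big f predT) //.
rewrite exchange_big; apply: eq_bigr => Y _.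
rewrite /ad_trace mulr_sumr; apply: eq_bigr => x /eqP fx.
rewrite mulr_sumr; apply: eq_bigr => y /eqP fy.
by rewrite fx fy mulrC.
Qed.

Lemma B_partition (T : finType) (f : 'I_N -> T) b d :
  B b d = \sum_X \sum_Y ad_trace (fun x => f x == X) (fun y => f y == Y) b d.
Proof.
rewrite B_ad_trace /ad_trace.
transitivity (\sum_x \sum_y c b y x * c d x y * (fun _ _ => 1) (f x) (f y)).
  by apply: eq_bigr => x _; apply: eq_bigr => y _; rewrite mulr1.
rewrite (ad_trace_partition f (fun _ _ => 1)).
by apply: eq_bigr => X _; apply: eq_bigr => Y _; rewrite mul1r.
Qed.

Definition cB a b d := \sum_k c a b k * B k d.

Lemma cB_killing a b d : cB a b d = killing c (lie_bracket c (e a) (e b)) (e d).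
Proof. by rewrite killing_basisr; apply: eq_bigr => k _; rewrite bracket_basis. Qed.

Lemma cB_cycle a b d : cB a b d = cB b d a.
Proof.
rewrite !cB_killing killing_bracket killing_basisl killing_basisr.
by apply: eq_bigr => k _; rewrite B_sym.
Qed.

Lemma cB_antil a b d : cB a b d = - cB b a d.
Proof. by rewrite /cB -sumrN; apply: eq_bigr => k _; rewrite sconst_anti mulNr. Qed.

Lemma killing_simple_orth (S T : pred 'I_N) a b :
  simple_in c T ->
  (forall a b k, T a -> T b -> ~~ T k -> c a b k = 0) ->
  (forall a b k, S a -> T b -> c a b k = 0) ->
  S a -> T b -> B a b = 0.
Proof.
move=> [[X0 [Y0 [TX0 [TY0 [k0 nz0]]]]] T_simple] cTT cST Sa Tb.
have brST X Y : supported S X -> supported T Y -> forall k, lie_bracket c X Y k = 0.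
  move=> SX TY k; apply: (bracket_supported (U := pred0) _ SX TY) => // x y z Sx Ty _.
  exact: cST.
pose I Y := supported T Y /\ forall Z, supported S Z -> killing c Z Y = 0.
have I_bracket X Y : supported T X -> supported T Y -> I (lie_bracket c X Y).
  move=> TX TY; split; first exact: bracket_supported TX TY.
  by move=> Z SZ; rewrite -killing_bracket killing0l // => k; apply: brST.
have I_ideal : ideal_in c T I.
  split=> [X [] //|]; split=> [|X Y TX [TY _]]; last exact: I_bracket.
  split; first by split=> [k _|Z _] //; rewrite killing0r.
  split=> [X Y [TX SX] [TY SY]|t X [TX SX]]; split=> [k Tk|Z SZ].
  - by rewrite TX // TY // addr0.
  - by rewrite killingDr SX // SY // addr0.
  - by rewrite TX // mulr0.
  - by rewrite killingZr SX // mulr0.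
have [I0|Iall] := T_simple I I_ideal.
  by rewrite (I0 _ (I_bracket _ _ TX0 TY0) k0) eqxx in nz0.
exact: (Iall _ (supported_basis Tb)).2 _ (supported_basis Sa).
Qed.

Section ScaledInvariantMetric.
Variable mu : 'I_N -> R.
Hypothesis mu_neq0 : forall a, mu a != 0.
Hypothesis B_mu : forall a b, mu a * B a b = mu b * B a b.

Definition scaled_gram : 'M[R]_N := \matrix_(x, y) (mu x * B x y).

Hypothesis scaled_gram_unit : scaled_gram \in unitmx.

Local Notation G := scaled_gram.
Local Notation H := (invmx scaled_gram).

Lemma scaled_gramE a b : G a b = mu a * B a b.
Proof. by rewrite mxE. Qed.

Lemma mulmxV_gram a b : \sum_w G a w * H w b = e b a.
Proof.
have := mulmxV scaled_gram_unit; move/matrixP => /(_ a b); rewrite !mxE => ->.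
by rewrite /basis_vec eq_sym.
Qed.

Lemma mulVmx_gram a b : \sum_w H a w * G w b = e b a.
Proof.
have := mulVmx scaled_gram_unit; move/matrixP => /(_ a b); rewrite !mxE => ->.
by rewrite /basis_vec eq_sym.
Qed.

Lemma H_sym a b : H a b = H b a.
Proof.
have GT : G^T = G by apply/matrixP => x y; rewrite !mxE B_mu B_sym.
by have /matrixP/(_ b a) := trmx_inv G; rewrite GT mxE.
Qed.

Lemma H_mu a b : mu a * H a b = mu b * H a b.
Proof.
suff Gmu : forall x y, G x y * mu y = mu x * G x y.
  by rewrite -(invmx_diag_comm scaled_gram_unit Gmu) mulrC.
by move=> x y; rewrite !mxE [in RHS]B_mu; ring.
Qed.

Lemma sconst_lower x y z : c x y z = \sum_w cB x y w * mu w * H w z.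
Proof.
transitivity (\sum_k c x y k * \sum_w G k w * H w z).
  by under eq_bigr do rewrite mulmxV_gram; rewrite sum_basis_vecr.
rewrite /cB; under eq_bigr do rewrite mulr_sumr.
rewrite exchange_big; apply: eq_bigr => w _.
rewrite !mulr_suml; apply: eq_bigr => k _.
by rewrite scaled_gramE B_mu; ring.
Qed.

Definition nabla a b f := 2^-1 * c a b f * (1 + (mu b - mu a) / mu f).

Lemma koszul_nabla a b d : koszul c G a b d = \sum_f nabla a b f * G f d.
Proof.
have sconst_gram x y z : \sum_k c x y k * G k z = mu z * cB x y z.
  by rewrite /cB mulr_sumr; apply: eq_bigr => k _; rewrite scaled_gramE B_mu; ring.
have E f : nabla a b f * G f d =
    2^-1 * (c a b f * G f d) + 2^-1 * (mu b - mu a) * (c a b f * B f d).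
  by rewrite /nabla scaled_gramE; field; apply: mu_neq0.
under eq_bigr do rewrite E.
rewrite big_split /= -!mulr_sumr sconst_gram -/(cB a b d) /koszul !sconst_gram.
by rewrite (cB_cycle d a b) -(cB_cycle a b d); ring.
Qed.

Lemma christ_nabla a b f : christ c G a b f = nabla a b f.
Proof.
rewrite /christ; under eq_bigr do rewrite koszul_nabla mulr_suml.
rewrite exchange_big /=; under eq_bigr do under eq_bigr do rewrite -mulrA.
by under eq_bigr do rewrite -mulr_sumr mulmxV_gram; rewrite sum_basis_vecr.
Qed.

Lemma nabla_trace0 h : \sum_a nabla a h a = 0.
Proof.
have E a : nabla a h a = 2^-1 * mu h * \sum_w cB a h w * H w a.
  rewrite /nabla sconst_lower.
  have -> : 1 + (mu h - mu a) / mu a = mu h / mu a by field; apply: mu_neq0.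
  rewrite mulr_sumr mulr_suml mulr_sumr; apply: eq_bigr => w _.
  by rewrite -(mulrA (cB a h w)) H_mu; field; apply: mu_neq0.
under eq_bigr do rewrite E.
rewrite -mulr_sumr; set S := \sum_a _.
suff S0 : S = - S by rewrite (_ : S = 0) ?mulr0 //; lra.
rewrite {1}/S exchange_big -sumrN; apply: eq_bigr => a _.
rewrite -sumrN; apply: eq_bigr => w _.
by rewrite (cB_cycle w h a) cB_antil H_sym mulNr.
Qed.

Definition ricci_weight (mb md mx my : R) :=
  (1 + (md - mx) / my) * (1 + (my - mb) / mx) / 4 - (1 + (md - mx) / my) / 2.

Lemma curv_nabla a b d f : curv c G a b d f =
  \sum_h (nabla b d h * nabla a h f - nabla a d h * nabla b h f)
  - \sum_k c a b k * nabla k d f.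
Proof.
rewrite /curv; congr (_ - _); first by apply: eq_bigr => h _; rewrite !christ_nabla.
by apply: eq_bigr => k _; rewrite christ_nabla.
Qed.

Lemma ricci_scaled b d : ricci c G b d =
  \sum_x \sum_y c b y x * c d x y * ricci_weight (mu b) (mu d) (mu x) (mu y).
Proof.
rewrite /ricci; under eq_bigr do rewrite curv_nabla sumrB.
rewrite big_split /= sumrB.
rewrite [X in X - _ + _](_ : _ = 0); last first.
  by rewrite exchange_big big1 // => h _; rewrite -mulr_sumr nabla_trace0 mulr0.
rewrite sub0r -sumrN.
under [X in _ + X]eq_bigr => i _ do rewrite -sumrN.
rewrite [X in _ + X]exchange_big -big_split /=; apply: eq_bigr => x _.
rewrite -sumrN -big_split /=; apply: eq_bigr => y _.
rewrite /nabla /ricci_weight (sconst_anti x d y) (sconst_anti y b x).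
by field; rewrite !mu_neq0.
Qed.

Lemma sum_H_B b : \sum_d H b d * B b d = (mu b)^-1.
Proof.
have E d : H b d * B b d = (mu b)^-1 * (H b d * G d b).
  by rewrite scaled_gramE B_mu B_sym; field; apply: mu_neq0.
under eq_bigr do rewrite E.
by rewrite -mulr_sumr mulVmx_gram /basis_vec eqxx mulr1.
Qed.

(* The dual form of the invariance of B: ad(e_x) is skew for (mu_a H_ab) = B^-1. *)
Lemma mu_H_sconst b x y :
  \sum_d mu b * H b d * c d x y = \sum_a c x a b * (mu a * H a y).
Proof.
have Hsym u v : mu u * H u v = mu v * H v u by rewrite H_mu H_sym.
transitivity (\sum_d \sum_w mu b * H b d * cB d x w * (mu w * H w y)).
  by apply: eq_bigr => d _; rewrite sconst_lower mulr_sumr; apply: eq_bigr => w _; ring.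
rewrite exchange_big; apply: eq_bigr => w _.
rewrite sconst_lower !mulr_suml; apply: eq_bigr => d _.
by rewrite (Hsym b d) (cB_cycle d x w); ring.
Qed.

Lemma sum_ad_trace_inside (Z X Y : pred 'I_N) :
  \sum_(b | Z b) \sum_d mu b * H b d * ad_trace X Y b d =
  \sum_(b | Z b) \sum_(x | X x) \sum_(y | Y y) c b y x * \sum_d mu b * H b d * c d x y.
Proof.
apply: eq_bigr => b _; under eq_bigr do rewrite mulr_sumr.
rewrite exchange_big; apply: eq_bigr => x _.
under eq_bigr do rewrite mulr_sumr.
rewrite exchange_big; apply: eq_bigr => y _.
by rewrite mulr_sumr; apply: eq_bigr => d _; ring.
Qed.

Lemma ad_trace_swap (Z X Y : pred 'I_N) :
  \sum_(b | Z b) \sum_d mu b * H b d * ad_trace X Y b d =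
  \sum_(y | Y y) \sum_d mu y * H y d * ad_trace X Z y d.
Proof.
rewrite !sum_ad_trace_inside.
under eq_bigr do under eq_bigr do under eq_bigr do rewrite mu_H_sconst.
symmetry; rewrite exchange_big.
under eq_bigr do rewrite exchange_big.
rewrite exchange_big; apply: eq_bigr => b _; apply: eq_bigr => x _.
apply: eq_bigr => y _; rewrite !mulr_sumr; apply: eq_bigr => a _.
by rewrite (sconst_anti b y x) (sconst_anti x a b) H_mu H_sym; ring.
Qed.

End ScaledInvariantMetric.

Section CartanMetric.
Variables (r s : nat) (blk : 'I_N -> option 'I_(r + s)).
Variables (kappa alpha : 'I_(r + s) -> R) (beta : R).
Hypothesis c_kk_p : forall a b k,
  blk a != None -> blk b != None -> blk k == None -> c a b k = 0.
Hypothesis c_kp_k : forall a b k,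
  blk a != None -> blk b == None -> blk k != None -> c a b k = 0.
Hypothesis c_pp_p : forall a b k,
  blk a == None -> blk b == None -> blk k == None -> c a b k = 0.
Hypothesis killing_k_lt0 : forall X,
  supported (fun a => blk a != None) X -> nonzero X -> killing c X X < 0.
Hypothesis killing_p_gt0 : forall X,
  supported (fun a => blk a == None) X -> nonzero X -> 0 < killing c X X.
Hypothesis k_ideal : forall i a b k,
  blk a == Some i -> blk b == Some i -> blk k != Some i -> c a b k = 0.
Hypothesis k_commute : forall i j, i != j ->
  forall a b k, blk a == Some i -> blk b == Some j -> c a b k = 0.
Hypothesis k_simple : forall i : 'I_(r + s),
  (i < r)%N -> simple_in c (fun a => blk a == Some i).
Hypothesis s_le1 : (s <= 1)%N.
Hypothesis k_center : forall i : 'I_(r + s), (r <= i)%N ->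
  (exists a, blk a == Some i) /\
  (forall a b k, blk a != None -> blk b == Some i -> c a b k = 0).
Hypothesis kappa_killing : forall i X Y,
  supported (fun a => blk a == Some i) X -> supported (fun a => blk a == Some i) Y ->
  killing_on c (fun a => blk a == Some i) X Y = kappa i * killing c X Y.
Hypothesis beta_gt0 : 0 < beta.
Hypothesis alpha_gt0 : forall i, 0 < alpha i.

(* [blocks_bracket Z X Y] is false when the bracket relations force c b y x = 0
   for all e_b in Z, e_x in X, e_y in Y. *)
Definition blocks_bracket (Z X Y : option 'I_(r + s)) : bool :=
  match Z, X, Y with
  | None, None, Some _ | None, Some _, None | Some _, None, None => true
  | Some i, Some j, Some k => (i == j) && (i == k)
  | _, _, _ => false
  end.

Lemma sconst_blocks0 b y x : ~~ blocks_bracket (blk b) (blk x) (blk y) -> c b y x = 0.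
Proof.
case Eb: (blk b) => [i|]; case Ex: (blk x) => [j|]; case Ey: (blk y) => [k|] //= H.
- have [eik|nik] := eqVneq i k; last by apply: (k_commute nik); rewrite ?Eb ?Ey.
  subst k; rewrite eqxx andbT in H.
  by apply: (k_ideal (i := i)); rewrite ?Eb ?Ey ?Ex //; apply: contra H => /eqP [->].
- by apply: c_kp_k; rewrite ?Eb ?Ey ?Ex.
- by apply: c_kk_p; rewrite ?Eb ?Ey ?Ex.
- by rewrite sconst_anti c_kp_k ?oppr0 ?Eb ?Ey ?Ex.
- by apply: c_pp_p; rewrite ?Eb ?Ey ?Ex.
Qed.

Lemma B_pk0 a b : blk a == None -> blk b != None -> B a b = 0.
Proof.
move=> pa kb; rewrite B_ad_trace /ad_trace big1 // => x _; rewrite big1 // => y _.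
have := @sconst_blocks0 a y x; have := @sconst_blocks0 b x y; rewrite (eqP pa).
move: kb; case: (blk b) => [i|] // _.
case: (blk x) => [j|]; case: (blk y) => [k|] //= c1 c2;
  by [rewrite c1 ?mulr0 | rewrite c2 ?mul0r].
Qed.

Lemma B_kk0 (i j : 'I_(r + s)) a b :
  i != j -> blk a == Some i -> blk b == Some j -> B a b = 0.
Proof.
wlog jr : i j a b / (j < r)%N => [simple_case nij ia jb|nij ia jb].
  have [jr|rj] := ltnP j r; first exact: simple_case jr nij ia jb.
  have [ir|ri] := ltnP i r.
    by rewrite B_sym; apply: (simple_case j i) => //; rewrite eq_sym.
  case/negP: nij; apply/eqP/val_inj => /=.
  by move: (ltn_ord i) (ltn_ord j); lia.
apply: (killing_simple_orth (S := fun a => blk a == Some i) (k_simple jr)) ia jb.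
  by move=> x y k; apply: k_ideal.
by move=> x y k; apply: (k_commute nij).
Qed.

Lemma B_block0 a b : blk a != blk b -> B a b = 0.
Proof.
case Ea: (blk a) => [i|]; case Eb: (blk b) => [j|] // nab.
- by apply: (@B_kk0 i j); rewrite ?Ea ?Eb //; apply: contra nab => /eqP ->.
- by rewrite B_sym; apply: B_pk0; rewrite ?Ea ?Eb.
- by apply: B_pk0; rewrite ?Ea ?Eb.
Qed.

Definition muB (Z : option 'I_(r + s)) : R := if Z is Some i then - alpha i else beta.
Definition mu a := muB (blk a).

Lemma muB_neq0 Z : muB Z != 0.
Proof. by case: Z => [i|] /=; rewrite ?oppr_eq0 gt_eqF. Qed.

Lemma mu_neq0 a : mu a != 0.
Proof. exact: muB_neq0. Qed.

Lemma B_mu a b : mu a * B a b = mu b * B a b.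
Proof.
have [Eab|nab] := eqVneq (blk a) (blk b); first by rewrite /mu Eab.
by rewrite B_block0 // !mulr0.
Qed.

Definition Qp X Y := killing c (proj (fun a => blk a == None) X)
  (proj (fun a => blk a == None) Y).
Definition Qk i X Y := - killing c (proj (fun a => blk a == Some i) X)
  (proj (fun a => blk a == Some i) Y).
Definition cartan_metric X Y := beta * Qp X Y + \sum_i alpha i * Qk i X Y.

Lemma metric_weight a b :
  beta * (if (blk a == None) && (blk b == None) then B a b else 0)
  + \sum_i alpha i * - (if (blk a == Some i) && (blk b == Some i) then B a b else 0)
  = mu a * B a b.
Proof.
have [Eab|nab] := eqVneq (blk a) (blk b); last first.
  rewrite B_block0 // !if_same mulr0 add0r big1 ?mulr0 // => i _.
  by rewrite if_same oppr0 mulr0.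
rewrite -Eab !andbb /mu /muB; case: (blk a) => [i|]; last first.
  by rewrite eqxx big1 ?addr0 // => j _; rewrite oppr0 mulr0.
rewrite mulr0 add0r (bigD1 i) //= eqxx big1 ?addr0 => [|j nji]; first by rewrite mulrN mulNr.
by rewrite (inj_eq Some_inj) eq_sym (negbTE nji) oppr0 mulr0.
Qed.

Lemma cartan_metric_coord X Y :
  cartan_metric X Y = \sum_a \sum_b X a * Y b * (mu a * B a b).
Proof.
under eq_bigr do under eq_bigr do rewrite -metric_weight mulrDr mulr_sumr.
under eq_bigr do rewrite big_split.
rewrite big_split /= /cartan_metric /Qp /Qk killing_proj mulr_sumr; congr (_ + _).
  by apply: eq_bigr => a _; rewrite mulr_sumr; apply: eq_bigr => b _; rewrite mulrCA.
under eq_bigr do rewrite exchange_big.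
rewrite exchange_big; apply: eq_bigr => i _.
rewrite killing_proj -sumrN mulr_sumr; apply: eq_bigr => a _.
by rewrite -sumrN mulr_sumr; apply: eq_bigr => b _; rewrite !mulrN mulrCA.
Qed.

Lemma gram_cartan_metric : gram cartan_metric = scaled_gram mu.
Proof.
by apply/matrixP => a b; rewrite !mxE cartan_metric_coord sum2_basis_vec.
Qed.

Lemma Qp_definite X :
  0 <= Qp X X /\ (Qp X X = 0 -> forall a, blk a == None -> X a = 0).
Proof.
rewrite /Qp; set Y := proj _ X.
have pY : supported (fun a => blk a == None) Y by move=> a; rewrite /Y /proj => /negbTE ->.
have [Y_nz|Y0] := nonzero_or_zero Y.
  have Y_pos := killing_p_gt0 pY Y_nz; split; first exact: ltW.
  by move=> Y_null; rewrite Y_null ltxx in Y_pos.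
split; first by rewrite killing0r.
by move=> _ a pa; move: (Y0 a); rewrite /Y /proj pa.
Qed.

Lemma Qk_definite i X :
  0 <= Qk i X X /\ (Qk i X X = 0 -> forall a, blk a == Some i -> X a = 0).
Proof.
rewrite /Qk; set Y := proj _ X.
have kY : supported (fun a => blk a != None) Y.
  by move=> a; rewrite negbK /Y /proj => /eqP ->.
have [Y_nz|Y0] := nonzero_or_zero Y.
  have Y_neg := killing_k_lt0 kY Y_nz; split; first by rewrite oppr_ge0 ltW.
  by move/eqP; rewrite oppr_eq0 => /eqP Y_null; rewrite Y_null ltxx in Y_neg.
split; first by rewrite killing0r ?oppr0.
by move=> _ a ka; move: (Y0 a); rewrite /Y /proj ka.
Qed.

Lemma cartan_gram_unit : scaled_gram mu \in unitmx.
Proof.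
rewrite -row_free_unit; apply: inj_row_free => v vG0; pose X a := v 0 a.
have X0 : cartan_metric X X = 0.
  rewrite cartan_metric_coord exchange_big big1 // => b _.
  have /rowP/(_ b) := vG0; rewrite !mxE => vGb.
  transitivity (X b * \sum_a v 0 a * scaled_gram mu a b); last by rewrite vGb mulr0.
  by rewrite mulr_sumr; apply: eq_bigr => a _; rewrite mxE /X -mulrA mulrCA.
have Qp_ge0 : 0 <= beta * Qp X X.
  by apply: mulr_ge0; [exact: ltW | exact: (Qp_definite X).1].
have Qk_ge0 i : 0 <= alpha i * Qk i X X.
  by apply: mulr_ge0; [exact: ltW | exact: (Qk_definite i X).1].
move/eqP: X0; rewrite /cartan_metric paddr_eq0 ?sumr_ge0 // => /andP[].
rewrite mulf_eq0 gt_eqF //= => /eqP/(Qp_definite X).2 Xp0.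
move=> /eqP/(psumr_eq0P (fun i _ => Qk_ge0 i)) Qk0.
apply/rowP => a; rewrite mxE; case Ea: (blk a) => [i|]; last by apply: Xp0; rewrite Ea.
have /eqP := Qk0 i isT; rewrite mulf_eq0 gt_eqF //= => /eqP/(Qk_definite i X).2 Xk0.
by apply: Xk0; rewrite Ea.
Qed.

Local Notation H := (invmx (scaled_gram mu)).

Lemma H_block0 a b : blk a != blk b -> H a b = 0.
Proof.
move=> nab; pose w x : R := (blk x == blk b)%:R.
suff Gw x y : scaled_gram mu x y * w y = w x * scaled_gram mu x y.
  have := invmx_diag_comm cartan_gram_unit Gw a b.
  by rewrite /w eqxx (negbTE nab) mulr1 mul0r.
rewrite mxE; have [Exy|nxy] := eqVneq (blk x) (blk y); first by rewrite /w Exy mulrC.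
by rewrite B_block0 // !mulr0 mul0r.
Qed.

Definition sig (Z X Y : option 'I_(r + s)) := \sum_(b | blk b == Z) \sum_d
  H b d * ad_trace (fun x => blk x == X) (fun y => blk y == Y) b d.

Definition block_weight Z X Y := ricci_weight (muB Z) (muB Z) (muB X) (muB Y).

Lemma scal_sig :
  scal c (scaled_gram mu) = \sum_Z \sum_X \sum_Y block_weight Z X Y * sig Z X Y.
Proof.
have E b d : H b d * ricci c (scaled_gram mu) b d = \sum_X \sum_Y block_weight (blk b) X Y
    * (H b d * ad_trace (fun x => blk x == X) (fun y => blk y == Y) b d).
  rewrite (ricci_scaled mu_neq0 B_mu cartan_gram_unit).
  rewrite (ad_trace_partition blk (fun X Y => ricci_weight (mu b) (mu d) (muB X) (muB Y))).
  have [Ebd|nbd] := eqVneq (blk b) (blk d); last first.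
    rewrite H_block0 // mul0r big1 // => X _.
    by rewrite big1 // => Y _; rewrite mul0r mulr0.
  rewrite mulr_sumr; apply: eq_bigr => X _; rewrite mulr_sumr; apply: eq_bigr => Y _.
  by rewrite /block_weight /mu Ebd mulrCA.
rewrite /scal; under eq_bigr do under eq_bigr do rewrite E.
rewrite (partition_big blk predT) //; apply: eq_bigr => Z _.
rewrite exchange_big_pair; apply: eq_bigr => X _; apply: eq_bigr => Y _.
rewrite /sig mulr_sumr; apply: eq_bigr => b /= /eqP ->.
by rewrite mulr_sumr.
Qed.

Lemma sig_zero Z X Y : ~~ blocks_bracket Z X Y -> sig Z X Y = 0.
Proof.
move=> nZXY; rewrite /sig big1 // => b /eqP Eb; rewrite big1 // => d _.
rewrite /ad_trace big1 ?mulr0 // => x /eqP Ex; rewrite big1 // => y /eqP Ey.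
by rewrite sconst_blocks0 ?mul0r // Eb Ex Ey.
Qed.

Lemma sig_row Z : \sum_X \sum_Y sig Z X Y = \sum_(b | blk b == Z) (mu b)^-1.
Proof.
rewrite /sig -(exchange_big_pair _ (fun b d X Y =>
  H b d * ad_trace (fun x => blk x == X) (fun y => blk y == Y) b d)).
apply: eq_bigr => b _; rewrite -(sum_H_B mu_neq0 B_mu cartan_gram_unit).
apply: eq_bigr => d _; rewrite (B_partition blk) !mulr_sumr.
by apply: eq_bigr => X _; rewrite mulr_sumr.
Qed.

Lemma sig_blockE Z X Y : sig Z X Y = \sum_(b | blk b == Z) \sum_(d | blk d == Z)
  H b d * ad_trace (fun x => blk x == X) (fun y => blk y == Y) b d.
Proof.
apply: eq_bigr => b /eqP Eb; rewrite [RHS]big_mkcond; apply: eq_bigr => d _.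
by case: eqP => // nd; rewrite H_block0 ?mul0r // Eb; apply/eqP => /esym.
Qed.

Lemma sig_sym Z X Y : sig Z X Y = sig Z Y X.
Proof.
rewrite !sig_blockE exchange_big; apply: eq_bigr => b _; apply: eq_bigr => d _.
by rewrite (H_sym B_mu) ad_traceC.
Qed.

Lemma sig_kkk i :
  sig (Some i) (Some i) (Some i) = kappa i * \sum_(b | blk b == Some i) (mu b)^-1.
Proof.
rewrite sig_blockE mulr_sumr; apply: eq_bigr => b ib.
rewrite -(sum_H_B mu_neq0 B_mu cartan_gram_unit) mulr_sumr big_mkcond.
apply: eq_bigr => d _; case: ifP => [id|nid]; last first.
  by rewrite H_block0 ?mul0r ?mulr0 // (eqP ib) eq_sym nid.
rewrite -killing_on_basis kappa_killing; [exact: mulrCA | exact: supported_basis..].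
Qed.

Lemma kappa_center (i : 'I_(r + s)) : (r <= i)%N -> kappa i = 0.
Proof.
move=> ri; have [[a ia] c_center] := k_center ri.
have := kappa_killing (supported_basis ia) (supported_basis ia).
rewrite killing_on_basis /ad_trace big1 => [/esym/eqP|x _]; last first.
  by rewrite big1 // => y iy; rewrite c_center ?mul0r // (eqP ia).
have B_neg : B a a < 0.
  apply: killing_k_lt0; last by exists a; rewrite /basis_vec eqxx oner_eq0.
  by apply: supported_basis; rewrite (eqP ia).
by rewrite mulf_eq0 (negbTE (ltr0_neq0 B_neg)) orbF => /eqP.
Qed.

Lemma muB_sig Z X Y : muB Z * sig Z X Y = \sum_(b | blk b == Z) \sum_d
  mu b * H b d * ad_trace (fun x => blk x == X) (fun y => blk y == Y) b d.
Proof.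
rewrite /sig mulr_sumr; apply: eq_bigr => b /eqP Eb; rewrite mulr_sumr /mu Eb.
by apply: eq_bigr => d _; rewrite mulrA.
Qed.

Lemma sig_swap j : beta * sig None None (Some j) = - alpha j * sig (Some j) None None.
Proof.
rewrite -[beta]/(muB None) -[- alpha j]/(muB (Some j)) !muB_sig.
exact: (ad_trace_swap B_mu cartan_gram_unit).
Qed.

Lemma sum_blocks_p (F : option 'I_(r + s) -> option 'I_(r + s) -> R) :
  (forall X Y, ~~ blocks_bracket None X Y -> F X Y = 0) ->
  \sum_X \sum_Y F X Y = \sum_j (F None (Some j) + F (Some j) None).
Proof.
move=> F0; rewrite big_option big_option F0 // add0r.
rewrite -big_split; apply: eq_bigr => j _ /=; congr (_ + _).
by rewrite big_option big1 ?addr0 // => k _; apply: F0.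
Qed.

Lemma sum_blocks_k i (F : option 'I_(r + s) -> option 'I_(r + s) -> R) :
  (forall X Y, ~~ blocks_bracket (Some i) X Y -> F X Y = 0) ->
  \sum_X \sum_Y F X Y = F None None + F (Some i) (Some i).
Proof.
move=> F0; rewrite big_option big_option [X in _ + X + _]big1 ?addr0; last first.
  by move=> k _; apply: F0.
congr (_ + _); under eq_bigr do rewrite big_option F0 // add0r.
rewrite (bigD1 i) //= (bigD1 i) //= big1 ?addr0 => [|k ik]; last first.
  by apply: F0; rewrite /= eqxx /= eq_sym.
rewrite big1 ?addr0 // => j ij; rewrite big1 // => k _.
by apply: F0; rewrite /= eq_sym (negbTE ij).
Qed.

Lemma sum_inv_mu Z :
  \sum_(b | blk b == Z) (mu b)^-1 = (muB Z)^-1 * #|[pred a | blk a == Z]|%:R.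
Proof.
rewrite (eq_bigr (fun _ => (muB Z)^-1)); last by move=> b /eqP Eb; rewrite /mu Eb.
by rewrite (eq_bigl [in [pred a | blk a == Z]]) // sumr_const mulr_natr.
Qed.

Lemma sig_kpp i : sig (Some i) None None =
  (1 - kappa i) * ((- alpha i)^-1 * #|[pred a | blk a == Some i]|%:R).
Proof.
have := sig_row (Some i); rewrite (sum_blocks_k (sig_zero (Z := Some i))) sig_kkk.
by rewrite !sum_inv_mu /= => /(canRL (addrK _)) ->; ring.
Qed.

Lemma sig_ppk j :
  sig None None (Some j) = #|[pred a | blk a == Some j]|%:R * (1 - kappa j) / beta.
Proof.
apply: (mulfI (lt0r_neq0 beta_gt0)); rewrite sig_swap sig_kpp.
by field; rewrite !gt_eqF.
Qed.

Lemma sig_pp_sum :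
  #|[pred a | blk a == None]|%:R / (2 * beta) = \sum_j sig None None (Some j).
Proof.
set S := \sum_j _.
have := sig_row None; rewrite (sum_blocks_p (sig_zero (Z := None))) sum_inv_mu /=.
under eq_bigr do rewrite (sig_sym None (Some _)) -mulr2n.
rewrite sumrMnl -/S => E.
have -> : S = S *+ 2 / 2 by rewrite -mulr_natr; field.
by rewrite E; field; rewrite gt_eqF.
Qed.

Lemma scal_cartan : scal c (gram cartan_metric) =
    - 4^-1 * (\sum_i alpha i / beta ^+ 2 * #|[pred a | blk a == Some i]|%:R * (1 - kappa i))
    - #|[pred a | blk a == None]|%:R / (2 * beta)
    + 4^-1 * (\sum_(i : 'I_(r + s) | (i < r)%N)
                #|[pred a | blk a == Some i]|%:R * kappa i / alpha i).
Proof.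
have sum_p : \sum_X \sum_Y block_weight None X Y * sig None X Y =
    \sum_j (block_weight None None (Some j) * sig None None (Some j)
            + block_weight None (Some j) None * sig None (Some j) None).
  by apply: sum_blocks_p => X Y /sig_zero ->; rewrite mulr0.
have sum_k i : \sum_X \sum_Y block_weight (Some i) X Y * sig (Some i) X Y =
    block_weight (Some i) None None * sig (Some i) None None
    + block_weight (Some i) (Some i) (Some i) * sig (Some i) (Some i) (Some i).
  by apply: sum_blocks_k => X Y /sig_zero ->; rewrite mulr0.
rewrite gram_cartan_metric scal_sig big_option sum_p.
under [X in _ + X]eq_bigr do rewrite sum_k.
rewrite sig_pp_sum [X in _ + 4^-1 * X]big_mkcond -big_split /= !mulr_sumr -sumrB -big_split /=.
apply: eq_bigr => i _.
have -> : (if (i < r)%N then #|[pred a | blk a == Some i]|%:R * kappa i / alpha i else 0)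
    = #|[pred a | blk a == Some i]|%:R * kappa i / alpha i.
  by case: ltnP => // /kappa_center ->; rewrite mulr0 mul0r.
rewrite (sig_sym None (Some i) None) sig_ppk sig_kpp sig_kkk sum_inv_mu.
by rewrite /block_weight /ricci_weight /=; field; rewrite !gt_eqF.
Qed.

End CartanMetric.
End LieAlgebra.

Theorem corollary3p8 (R : realFieldType) (N r s : nat)
  (c : sconst R N)
  (* block labelling of the basis: Some i <-> e_a in k_{i+1}, None <-> e_a in p *)
  (blk : 'I_N -> option 'I_(r + s))
  (kappa : 'I_(r + s) -> R) (alpha : 'I_(r + s) -> R) (beta : R) :
  (* g is a simple real Lie algebra *)
  is_lie_algebra c ->
  simple_in c predT ->
  (* Cartan decomposition g = k + p (k = Lie algebra of a maximal compact K) *)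
  (forall a b k, blk a != None -> blk b != None -> blk k == None -> c a b k = 0) ->
  (forall a b k, blk a != None -> blk b == None -> blk k != None -> c a b k = 0) ->
  (forall a b k, blk a == None -> blk b == None -> blk k == None -> c a b k = 0) ->
  (forall X, supported (fun a => blk a != None) X -> nonzero X -> killing c X X < 0) ->
  (forall X, supported (fun a => blk a == None) X -> nonzero X -> 0 < killing c X X) ->
  (* G non-compact *)
  (exists a, blk a == None) ->
  (* k = k_1 + ... + k_{r+s}: each k_i is an ideal of k, distinct ones commute *)
  (forall i a b k, blk a == Some i -> blk b == Some i -> blk k != Some i -> c a b k = 0) ->
  (forall i j, i != j -> forall a b k, blk a == Some i -> blk b == Some j -> c a b k = 0) ->
  (* k_1, ..., k_r are simple *)
  (forall i : 'I_(r + s), (i < r)%N -> simple_in c (fun a => blk a == Some i)) ->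
  (* s <= 1, and k_{r+s} (if s = 1) is the non-trivial centre of k *)
  (s <= 1)%N ->
  (forall i : 'I_(r + s), (r <= i)%N ->
     (exists a, blk a == Some i) /\
     (forall a b k, blk a != None -> blk b == Some i -> c a b k = 0)) ->
  (* B_i = kappa_i B|k_i *)
  (forall i X Y, supported (fun a => blk a == Some i) X ->
     supported (fun a => blk a == Some i) Y ->
     killing_on c (fun a => blk a == Some i) X Y = kappa i * killing c X Y) ->
  (* the metric g = beta Q|p + sum_i alpha_i Q|k_i, with Q = B|p - B|k *)
  0 < beta -> (forall i, 0 < alpha i) ->
  let n := #|[pred a | blk a == None]| in
  let d := fun i => #|[pred a | blk a == Some i]| in
  let Qp := fun X Y => killing c (proj (fun a => blk a == None) X) (proj (fun a => blk a == None) Y) in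
  let Qk := fun i X Y => - killing c (proj (fun a => blk a == Some i) X) (proj (fun a => blk a == Some i) Y) in
  let gmet := fun X Y => beta * Qp X Y + \sum_i alpha i * Qk i X Y in
  scal c (gram gmet) =
    - 4^-1 * (\sum_i alpha i / beta ^+ 2 * (d i)%:R * (1 - kappa i))
    - n%:R / (2 * beta)
    + 4^-1 * (\sum_(i : 'I_(r + s) | (i < r)%N) (d i)%:R * kappa i / alpha i).
Proof.
move=> lie _ c_kk_p c_kp_k c_pp_p k_lt0 p_gt0 _ k_ideal k_commute k_simple s_le1
  k_center kappa_killing beta_gt0 alpha_gt0 /=.
exact: (scal_cartan lie c_kk_p c_kp_k c_pp_p k_lt0 p_gt0 k_ideal k_commute k_simple
  s_le1 k_center kappa_killing beta_gt0 alpha_gt0).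
Qed.
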